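(* Let $P$ be a codirected poset and $M\colon P\to\mathbf{Vec}$ a pointwise finite-dimensional persistence module with $M_p\neq 0$ for all $p\in P$ and such that $M(p\le q)\colon M_p\to M_q$ is injective for all $p\le q$. Then there is a monomorphism $k_P\hookrightarrow M$. If moreover $P$ is directed, then $M$ has a direct summand isomorphic to $k_P$.
   Context: $P$ is codirected if for all $p,q\in P$ there is $c\in P$ with $c\le p,q$; directed if for all $p,q$ there is $c$ with $p,q\le c$. Persistence modules over $P$ are functors $P\to\mathbf{Vec}$ with structure maps $M(p\le q)$. $k_P$ is the module with $k$ at every point and identity structure maps. A monomorphism is a pointwise injective morphism. *)

(* Persistence modules over a poset P with values in
   finite-dimensional K-vector spaces (vectType K). *)
From HB Require Import structures.
From mathcomp Require Import all_boot all_order all_algebra.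
Set Implicit Arguments. Unset Strict Implicit. Unset Printing Implicit Defensive.
Import Order.TTheory GRing.Theory.
Local Open Scope ring_scope.

Definition codirected (d : Order.disp_t) (P : porderType d) : Prop :=
  forall p q : P, exists c : P, (c <= p)%O /\ (c <= q)%O.
Definition directed (d : Order.disp_t) (P : porderType d) : Prop :=
  forall p q : P, exists c : P, (p <= c)%O /\ (q <= c)%O.

Record pmod (K : fieldType) (d : Order.disp_t) (P : porderType d) := PMod {
  pm_obj : P -> vectType K;
  pm_map : forall p q : P, (p <= q)%O -> 'Hom(pm_obj p, pm_obj q) }.
Arguments pm_map {K d P} p0 {p q} _.
Arguments pm_obj {K d P} p0 p.

Definition is_pmod K d (P : porderType d) (M : pmod K P) : Prop :=
  (forall (p : P) (h : (p <= p)%O), pm_map M h = \1%VF) /\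
  (forall (p q r : P) (hpq : (p <= q)%O) (hqr : (q <= r)%O) (hpr : (p <= r)%O),
      pm_map M hpr = (pm_map M hqr \o pm_map M hpq)%VF).

Definition is_natural K d (P : porderType d) (M N : pmod K P)
  (f : forall p : P, 'Hom(pm_obj M p, pm_obj N p)) : Prop :=
  forall (p q : P) (h : (p <= q)%O), (pm_map N h \o f p = f q \o pm_map M h)%VF.

Definition is_mono K d (P : porderType d) (M N : pmod K P)
  (f : forall p : P, 'Hom(pm_obj M p, pm_obj N p)) : Prop :=
  is_natural f /\ forall p : P, injective (fun v => f p v).

Definition pmod_iso K d (P : porderType d) (M N : pmod K P) : Prop :=
  exists (f : forall p : P, 'Hom(pm_obj M p, pm_obj N p))
         (g : forall p : P, 'Hom(pm_obj N p, pm_obj M p)),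
    [/\ is_natural f, is_natural g,
        forall p, (g p \o f p = \1)%VF & forall p, (f p \o g p = \1)%VF].

Definition constP (K : fieldType) d (P : porderType d) : pmod K P :=
  @PMod K d P (fun _ => (K^o : vectType K)) (fun p q _ => \1%VF).

Definition dsum K d (P : porderType d) (M N : pmod K P) : pmod K P :=
  @PMod K d P (fun p => ((pm_obj M p * pm_obj N p)%type : vectType K))
    (fun p q h => linfun (fun x : (pm_obj M p * pm_obj N p)%type =>
                            (pm_map M h x.1, pm_map N h x.2))).

From HB Require Import structures.
From mathcomp Require Import all_boot all_order all_algebra.
From mathcomp Require Import boolp classical_sets.
Import Order.TTheory GRing.Theory.
Set Implicit Arguments. Unset Strict Implicit. Unset Printing Implicit Defensive.
Local Open Scope ring_scope.

(* Let p0 be a point where dim M_p is minimal.  Below p0 the structure maps are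
   injective between spaces of equal dimension, hence bijective, so a nonzero
   w0 in M_p0 has a preimage at every c <= p0; pushing it forward to p along a
   common lower bound c of p and p0 gives a vector v_p that, by codirectedness,
   does not depend on c.  The family v is natural and nowhere zero, i.e. a
   monomorphism k_P -> M.  For directed P, Zorn's lemma yields a subspace of
   the colimit of M that is maximal among those missing the image of v; it is a
   complement of the line spanned by v, and the coordinate along v is a natural
   retraction phi with phi v = 1, whose kernel is the complementary summand. *)

Lemma linfun_linearE (K : fieldType) (aT rT : vectType K) (f : aT -> rT) :
  linear f -> linfun f =1 f.
Proof.
move=> f_lin; pose F : {linear aT -> rT} := HB.pack f (GRing.isLinear.Build _ _ _ _ f f_lin).
exact: (lfunE F).
Qed.

Lemma exists_minimizer (T : Type) (f : T -> nat) (t : T) :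
  exists t0, forall t1, (f t0 <= f t1)%N.
Proof.
have f_hit : exists n, `[< exists t1, f t1 = n >] by exists (f t); apply/asboolP; exists t.
case: (ex_minnP f_hit) => _ /asboolP[t0 <-] t0_min.
by exists t0 => t1; apply: t0_min; apply/asboolP; exists t1.
Qed.

Section PersistenceModule.
Variables (K : fieldType) (d : Order.disp_t) (P : porderType d) (M : pmod K P).

Local Notation M_ := (pm_obj M).
Local Notation "M( h )" := (pm_map M h) (format "M( h )").

Definition natural_vector (v : forall p, M_ p) :=
  forall (p q : P) (h : (p <= q)%O), M(h) (v p) = v q.

Definition natural_covector (phi : forall p, 'Hom(M_ p, K^o)) :=
  forall (p q : P) (h : (p <= q)%O) x, phi q (M(h) x) = phi p x.

Lemma mono_of_natural_vector (v : forall p, M_ p) :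
  natural_vector v -> (forall p, v p != 0) ->
  exists f : forall p, 'Hom(pm_obj (constP K P) p, M_ p), is_mono f.
Proof.
move=> v_nat v_neq0.
have scale_lin p : linear (fun k : K^o => k *: v p).
  by move=> a k l; rewrite scalerDl scalerA.
exists (fun p => linfun (fun k : K^o => k *: v p)); split.
  move=> p q h; apply/lfunP => k.
  by rewrite !comp_lfunE id_lfunE !linfun_linearE // linearZ /= v_nat.
move=> p k l /=; rewrite !linfun_linearE // => /eqP.
by rewrite -subr_eq0 -scalerBl scaler_eq0 (negbTE (v_neq0 p)) orbF subr_eq0 => /eqP.
Qed.

Hypothesis M_functor : is_pmod M.

Lemma pm_mapD (p q r : P) (hpq : (p <= q)%O) (hqr : (q <= r)%O) (hpr : (p <= r)%O) x :
  M(hpr) x = M(hqr) (M(hpq) x).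
Proof. by rewrite (M_functor.2 p q r hpq hqr hpr) comp_lfunE. Qed.

Lemma pm_map_id (p : P) (h : (p <= p)%O) x : M(h) x = x.
Proof. by rewrite M_functor.1 id_lfunE. Qed.

Section Splitting.
Variables (v : forall p, M_ p) (phi : forall p, 'Hom(M_ p, K^o)).
Hypotheses (v_natural : natural_vector v) (phi_natural : natural_covector phi).
Hypothesis phi_v : forall p, phi p (v p) = 1.

Local Notation N_ p := (subvs_of (lker (phi p))).

Lemma pm_map_lker (p q : P) (h : (p <= q)%O) (n : N_ p) : M(h) (vsval n) \in lker (phi q).
Proof. by rewrite memv_ker phi_natural -memv_ker subvsP. Qed.

Definition lker_map (p q : P) (h : (p <= q)%O) : 'Hom(N_ p, N_ q) :=
  linfun (fun n : N_ p => vsproj (lker (phi q)) (M(h) (vsval n))).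

Lemma lker_mapE (p q : P) (h : (p <= q)%O) n : vsval (lker_map h n) = M(h) (vsval n).
Proof.
rewrite linfun_linearE ?vsprojK ?pm_map_lker //.
by move=> a x y; rewrite !linearP.
Qed.

Definition lker_pmod : pmod K P := @PMod K d P (fun p => N_ p) lker_map.

Lemma lker_pmod_functor : is_pmod lker_pmod.
Proof.
split=> [p h|p q r hpq hqr hpr]; apply/lfunP => n; apply: val_inj.
  by rewrite id_lfunE /= lker_mapE pm_map_id.
by rewrite comp_lfunE /= !lker_mapE (pm_mapD hpq hqr).
Qed.

Lemma sub_coord_lker p (x : M_ p) : x - phi p x *: v p \in lker (phi p).
Proof. by rewrite memv_ker linearB linearZ /= phi_v [_ *: 1]mulr1 subrr. Qed.

Local Notation S_ p := (pm_obj (dsum (constP K P) lker_pmod) p).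

Definition split_from p : 'Hom(S_ p, M_ p) :=
  linfun (fun z : S_ p => (z.1 : K) *: v p + vsval z.2).

Definition split_to p : 'Hom(M_ p, S_ p) :=
  linfun (fun x : M_ p => ((phi p x : K^o), vsproj (lker (phi p)) (x - phi p x *: v p)) : S_ p).

Lemma split_fromE p (z : S_ p) : split_from p z = (z.1 : K) *: v p + vsval z.2.
Proof.
rewrite linfun_linearE // => a [k n] [l m] /=.
by rewrite scalerDl scalerDr scalerA addrACA.
Qed.

Lemma split_toE p (x : M_ p) :
  split_to p x = ((phi p x : K^o), vsproj (lker (phi p)) (x - phi p x *: v p)).
Proof.
rewrite linfun_linearE // => a x1 x2; congr (_, _); first exact: linearP.
rewrite -[(a *: _).2]/(a *: vsproj _ _) -[RHS]linearP; congr (vsproj _ _).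
by rewrite linearP scalerBr scalerA scalerDl opprD addrACA.
Qed.

Lemma dsum_mapE (p q : P) (h : (p <= q)%O) (z : S_ p) :
  pm_map (dsum (constP K P) lker_pmod) h z = (z.1, lker_map h z.2).
Proof.
rewrite /= linfun_linearE /= ?id_lfunE // => a [k n] [l m] /=.
by rewrite !linearP.
Qed.

Lemma split_of_natural_retraction :
  exists N : pmod K P, is_pmod N /\ pmod_iso M (dsum (constP K P) N).
Proof.
exists lker_pmod; split; first exact: lker_pmod_functor.
exists split_to, split_from; split.
- move=> p q h; apply/lfunP => x; rewrite !comp_lfunE dsum_mapE !split_toE /=.
  congr (_, _); first by rewrite phi_natural.
  apply: (can_inj vsvalK); rewrite lker_mapE !vsprojK ?sub_coord_lker //.
  by rewrite phi_natural linearB linearZ /= v_natural.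
- move=> p q h; apply/lfunP => z.
  by rewrite !comp_lfunE dsum_mapE !split_fromE /= lker_mapE linearD linearZ /= v_natural.
- move=> p; apply/lfunP => x.
  by rewrite comp_lfunE id_lfunE split_toE split_fromE vsprojK ?sub_coord_lker // addrC subrK.
- move=> p; apply/lfunP => -[k n].
  have phi_n : phi p (vsval n) = 0 by apply/eqP; rewrite -memv_ker subvsP.
  have phi_kn : phi p (k *: v p + vsval n) = k.
    by rewrite linearD linearZ /= phi_v phi_n [_ *: 1]mulr1 addr0.
  by rewrite comp_lfunE id_lfunE split_fromE split_toE /= phi_kn addrAC subrr add0r vsvalK.
Qed.

End Splitting.

Section InjectiveStructureMaps.
Hypothesis M_inj : forall (p q : P) (h : (p <= q)%O), injective (fun x => M(h) x).

Lemma pm_map_inj (p q : P) (h : (p <= q)%O) : injective M(h).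
Proof. exact: M_inj. Qed.
Arguments pm_map_inj {p q} h.

Lemma pm_map_eq0 (p q : P) (h : (p <= q)%O) x : (M(h) x == 0) = (x == 0).
Proof.
apply/eqP/eqP=> [hx0|->]; last exact: linear0.
by apply: (pm_map_inj h); rewrite hx0 linear0.
Qed.

Lemma lker_pm_map (p q : P) (h : (p <= q)%O) : lker M(h) = 0%VS.
Proof. by apply/eqP/lker0P => x y; apply: M_inj. Qed.

Local Notation dimM p := (\dim (fullv : {vspace M_ p})).

Lemma pm_map_surj (p q : P) (h : (p <= q)%O) :
  (dimM q <= dimM p)%N -> forall y, exists x, M(h) x = y.
Proof.
move=> dim_le y.
have : y \in (M(h) @: fullv)%VS.
  suff -> : (M(h) @: fullv)%VS = fullv by rewrite memvf.
  apply/eqP; rewrite eqEdim subvf (limg_dim_eq (f := M(h))) //.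
  by rewrite lker_pm_map capv0.
by case/memv_imgP => x _ ->; exists x.
Qed.

Section Codirected.
Hypothesis P_codirected : codirected P.
Variables (p0 : P) (w0 : M_ p0).
Hypothesis p0_min : forall p, (dimM p0 <= dimM p)%N.
Hypothesis w0_neq0 : w0 != 0.

Definition germ_of_w0 (p : P) (x : M_ p) :=
  exists c (hcp : (c <= p)%O) (hc0 : (c <= p0)%O) y, M(hc0) y = w0 /\ M(hcp) y = x.
Arguments germ_of_w0 : clear implicits.

Lemma pm_map_surj_below_p0 (c : P) (h : (c <= p0)%O) y : exists x, M(h) x = y.
Proof. by apply: pm_map_surj; apply: p0_min. Qed.

Lemma germ_of_w0_exists p : exists x, germ_of_w0 p x.
Proof.
have [c [hcp hc0]] := P_codirected p p0.
have [y hy] := pm_map_surj_below_p0 hc0 w0.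
by exists (M(hcp) y), c, hcp, hc0, y.
Qed.

Lemma germ_of_w0_unique p (x x' : M_ p) : germ_of_w0 p x -> germ_of_w0 p x' -> x = x'.
Proof.
move=> [c [hcp [hc0 [y [hy <-]]]]] [c' [hcp' [hc0' [y' [hy' <-]]]]].
have [e [hec hec']] := P_codirected c c'.
have he0 := le_trans hec hc0; have hep := le_trans hec hcp.
have [z hz] := pm_map_surj_below_p0 he0 w0.
have -> : y = M(hec) z by apply: (pm_map_inj hc0); rewrite /= -pm_mapD hz hy.
have -> : y' = M(hec') z by apply: (pm_map_inj hc0'); rewrite /= -pm_mapD hz hy'.
by rewrite -(pm_mapD hec hcp hep) -(pm_mapD hec' hcp' hep).
Qed.

Definition germ_vector p : M_ p := sval (cid (germ_of_w0_exists p)).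

Lemma germ_vectorP p : germ_of_w0 p (germ_vector p).
Proof. exact: svalP. Qed.

Lemma germ_vector_natural : natural_vector germ_vector.
Proof.
move=> p q h; apply: germ_of_w0_unique (germ_vectorP q).
have [c [hcp [hc0 [y [hy <-]]]]] := germ_vectorP p.
by exists c, (le_trans hcp h), hc0, y; split; last exact: pm_mapD.
Qed.

Lemma germ_vector_neq0 p : germ_vector p != 0.
Proof.
have [c [hcp [hc0 [y [hy <-]]]]] := germ_vectorP p.
by rewrite pm_map_eq0 -(pm_map_eq0 hc0) hy.
Qed.

End Codirected.

Lemma exists_natural_nonzero_vector :
  codirected P -> (forall p, dimM p != 0%N) ->
  exists v : forall p, M_ p, natural_vector v /\ forall p, v p != 0.
Proof.
move=> P_codirected M_neq0.
have [[p1 _]|P_empty] := pselect (exists p : P, True); last first.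
  by exists (fun p => 0) => //; split=> p; case: P_empty; exists p.
have [p0 p0_min] := exists_minimizer (fun p => dimM p) p1.
have w0_neq0 : vpick (fullv : {vspace M_ p0}) != 0 by rewrite vpick0 -dimv_eq0.
exists (germ_vector P_codirected (vpick fullv) p0_min); split.
  exact: germ_vector_natural.
exact: germ_vector_neq0.
Qed.

Section Directed.
Hypothesis P_directed : directed P.
Variable v : forall p, M_ p.
Hypotheses (v_natural : natural_vector v) (v_neq0 : forall p, v p != 0).

Definition family_le (H H' : forall p, M_ p -> Prop) := forall p x, H p x -> H' p x.

(* The traces on the M_p of a subspace of the colimit of M that misses the image of v. *)
Record avoids_v (H : forall p, M_ p -> Prop) : Prop := AvoidsV {
  avoids_v0 : forall p, H p 0;
  avoids_v_lin : forall p a (x y : M_ p), H p x -> H p y -> H p (a *: x + y);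
  avoids_v_pm_map : forall (p q : P) (h : (p <= q)%O) x, H q (M(h) x) <-> H p x;
  avoids_v_notin : forall p, ~ H p (v p) }.

Lemma avoids_vZ H p a (x : M_ p) : avoids_v H -> H p x -> H p (a *: x).
Proof. by move=> H_avoids Hx; rewrite -[_ *: _]addr0; apply: avoids_v_lin (avoids_v0 _ _). Qed.

Lemma avoids_vB H p (x y : M_ p) : avoids_v H -> H p x -> H p y -> H p (x - y).
Proof. by move=> H_avoids Hx Hy; rewrite addrC -scaleN1r; apply: avoids_v_lin. Qed.

Lemma exists_maximal_avoids_v :
  exists H, avoids_v H /\ forall H', avoids_v H' -> family_le H H' -> family_le H' H.
Proof.
have zero_avoids : avoids_v (fun p x => x = 0).
  split=> [//|p a x y -> ->|p q h x|p v0]; first by rewrite scaler0 addr0.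
    by split=> [/eqP|->]; [rewrite pm_map_eq0 => /eqP | rewrite linear0].
  by move: (v_neq0 p); rewrite v0 eqxx.
pose R (s t : {H | avoids_v H}) := `[< family_le (sval s) (sval t) >].
have [||A A_total|[H H_avoids] H_max] := ZL_preorder (exist _ _ zero_avoids) (R := R).
- by move=> s; apply/asboolP.
- by move=> r s t /asboolP rs /asboolP st; apply/asboolP => p x /rs /st.
- have [[s0 As0]|A_empty] := pselect (exists s, A s); last first.
    by exists (exist _ _ zero_avoids) => s As; case: A_empty; exists s.
  pose U p x := exists2 s, A s & sval s p x.
  have U_avoids : avoids_v U.
    split=> [p|p a x y [[S S_av] AS Sx] [[T T_av] AT Ty]|p q h x|p [[S S_av] _]] /=.
    - by case: s0 As0 => S S_av AS; exists (exist _ S S_av) => //; apply: avoids_v0 S_av p.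
    - have [/asboolP /= ST|/asboolP /= TS] := A_total _ _ AS AT.
        by exists (exist _ T T_av) => //=; apply: (@avoids_v_lin T) (ST _ _ Sx) Ty.
      by exists (exist _ S S_av) => //=; apply: (@avoids_v_lin S) Sx (TS _ _ Ty).
    - by split=> -[[S S_av] AS Sx]; exists (exist _ S S_av) => //; apply/(avoids_v_pm_map S_av h).
    - exact: avoids_v_notin S_av p.
  by exists (exist _ _ U_avoids) => s As; apply/asboolP => p x hx; exists s.
- exists H; split=> // H' H'_avoids le_HH'.
  by apply/asboolP/(H_max (exist _ _ H'_avoids)); apply/asboolP.
Qed.

Section Extension.
Variable H : forall p, M_ p -> Prop.
Arguments H : clear implicits.
Hypothesis H_avoids : avoids_v H.
Variables (p : P) (x : M_ p).

Definition span_with (q : P) (y : M_ q) :=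
  exists r (hp : (p <= r)%O) (hq : (q <= r)%O) c, H r (M(hq) y - c *: M(hp) x).

Lemma span_with_pm_map q (y : M_ q) r r' (hp : (p <= r)%O) (hq : (q <= r)%O)
    (hp' : (p <= r')%O) (hq' : (q <= r')%O) c :
  (r <= r')%O -> H r (M(hq) y - c *: M(hp) x) -> H r' (M(hq') y - c *: M(hp') x).
Proof.
move=> hr /(avoids_v_pm_map H_avoids hr).
by rewrite linearB linearZ /= -!pm_mapD.
Qed.

Lemma le_span_with : family_le H span_with.
Proof.
move=> q y Hy; have [r [hp hq]] := P_directed p q.
exists r, hp, hq, 0; rewrite scale0r subr0.
exact/(avoids_v_pm_map H_avoids hq).
Qed.

Lemma span_with_self : span_with x.
Proof.
exists p, (lexx p), (lexx p), 1.
by rewrite scale1r subrr; apply: avoids_v0 H_avoids p.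
Qed.

Lemma avoids_v_span_with : (forall c, ~ H p (x - c *: v p)) -> avoids_v span_with.
Proof.
move=> x_notin; split.
- move=> q; have [r [hp hq]] := P_directed p q.
  by exists r, hp, hq, 0; rewrite linear0 scale0r subr0; apply: avoids_v0 H_avoids r.
- move=> q a y1 y2 [r1 [hp1 [hq1 [c1 H1]]]] [r2 [hp2 [hq2 [c2 H2]]]].
  have [r [h1 h2]] := P_directed r1 r2.
  have hp := le_trans hp1 h1; have hq := le_trans hq1 h1.
  exists r, hp, hq, (a * c1 + c2).
  have := avoids_v_lin H_avoids a (span_with_pm_map hp hq h1 H1) (span_with_pm_map hp hq h2 H2).
  by rewrite linearP scalerDl -scalerA scalerBr opprD addrACA.
- move=> q q' h y; split=> -[r [hp [hq [c Hr]]]].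
    by exists r, hp, (le_trans h hq), c; rewrite (pm_mapD h hq).
  have [r' [hr hq']] := P_directed r q'.
  exists r', (le_trans hp hr), hq', c.
  by rewrite -(pm_mapD h hq' (le_trans hq hr)); apply: span_with_pm_map Hr.
- move=> q [r [hp [hq [c Hr]]]]; rewrite v_natural in Hr.
  have [c0|c_neq0] := eqVneq c 0.
    by move: Hr; rewrite c0 scale0r subr0; apply: avoids_v_notin H_avoids r.
  apply: (x_notin c^-1); apply/(avoids_v_pm_map H_avoids hp).
  have -> : M(hp) (x - c^-1 *: v p) = (- c^-1) *: (v r - c *: M(hp) x).
    rewrite linearB linearZ /= v_natural scalerBr scalerA mulNr mulVf //.
    by rewrite scaleN1r opprK scaleNr addrC.
  exact: avoids_vZ.
Qed.

End Extension.

Section MaximalAvoidingFamily.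
Variable H : forall p, M_ p -> Prop.
Arguments H : clear implicits.
Hypothesis H_avoids : avoids_v H.
Hypothesis H_max : forall H', avoids_v H' -> family_le H H' -> family_le H' H.

Lemma maximal_avoids_v_complement p (x : M_ p) : exists c : K, H p (x - c *: v p).
Proof.
apply: contrapT => /forallNP x_notin.
have x_in_H : H p x := H_max (avoids_v_span_with H_avoids x_notin)
  (le_span_with H_avoids x) (span_with_self H_avoids x).
by apply: (x_notin 0); rewrite scale0r subr0.
Qed.

Definition coord p (x : M_ p) : K := sval (cid (maximal_avoids_v_complement x)).

Lemma coordP p (x : M_ p) : H p (x - coord x *: v p).
Proof. exact: svalP (cid (maximal_avoids_v_complement x)). Qed.

Lemma coord_unique p (x : M_ p) c : H p (x - c *: v p) -> coord x = c.
Proof.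
move=> Hc; apply: contrapT => /eqP neq.
apply: (avoids_v_notin H_avoids (p := p)).
have -> : v p = (c - coord x)^-1 *: ((x - coord x *: v p) - (x - c *: v p)).
  rewrite opprB [_ + (_ - _)]addrC addrA subrK -scalerBl scalerA mulVf ?scale1r //.
  by rewrite subr_eq0 eq_sym.
exact: avoids_vZ H_avoids (avoids_vB H_avoids (coordP x) Hc).
Qed.

Lemma coord_linear p : linear (@coord p : M_ p -> K^o).
Proof.
move=> a x y; apply: coord_unique.
have := @avoids_v_lin H H_avoids p a _ _ (coordP x) (coordP y).
by rewrite scalerBr scalerA scalerDl opprD addrACA.
Qed.

Lemma coord_v p : coord (v p) = 1.
Proof. by apply: coord_unique; rewrite scale1r subrr; apply: avoids_v0 H_avoids p. Qed.

Lemma coord_pm_map p q (h : (p <= q)%O) x : coord (M(h) x) = coord x.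
Proof.
apply: coord_unique; rewrite -(v_natural h) -linearZ -linearB /=.
exact/(avoids_v_pm_map H_avoids h)/coordP.
Qed.

End MaximalAvoidingFamily.

Lemma exists_natural_retraction :
  exists phi, natural_covector phi /\ forall p, phi p (v p) = 1.
Proof.
have [H [H_avoids H_max]] := exists_maximal_avoids_v.
pose phi p := linfun (coord H_avoids H_max (p := p) : M_ p -> K^o).
have phiE p : phi p =1 coord H_avoids H_max (p := p).
  exact: linfun_linearE (coord_linear H_avoids H_max (p := p)).
exists phi; split=> [p q h x|p]; rewrite !phiE.
  exact: coord_pm_map.
exact: coord_v.
Qed.

End Directed.
End InjectiveStructureMaps.
End PersistenceModule.

Theorem lemma2p2 (K : fieldType) (d : Order.disp_t) (P : porderType d)
  (M : pmod K P) :
  is_pmod M ->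
  codirected P ->
  (forall p : P, \dim (fullv : {vspace pm_obj M p}) != 0%N) ->
  (forall (p q : P) (h : (p <= q)%O), injective (fun v => pm_map M h v)) ->
  (exists f : forall p : P, 'Hom(pm_obj (constP K P) p, pm_obj M p), is_mono f) /\
  (directed P ->
   exists N : pmod K P, is_pmod N /\ pmod_iso M (dsum (constP K P) N)).
Proof.
move=> M_functor P_codirected M_neq0 M_inj.
have [v [v_natural v_neq0]] := exists_natural_nonzero_vector M_functor M_inj P_codirected M_neq0.
split; first exact: mono_of_natural_vector v_natural v_neq0.
move=> P_directed.
have [phi [phi_natural phi_v]] :=
  exists_natural_retraction M_functor M_inj P_directed v_natural v_neq0.
exact: (split_of_natural_retraction M_functor v_natural phi_natural phi_v).
Qed.
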